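(* Let $(\mathcal C,\otimes,I,\top)$ be a pseudo-purifiable discard category. Then the relation $\preceq$ on each hom-set $\mathcal C(A,B)$ is reflexive and transitive, and it is preserved by composition and monoidal product: if $f\preceq f'$ in $\mathcal C(A,B)$ and $g\preceq g'$ in $\mathcal C(B,C)$ then $g\circ f\preceq g'\circ f'$, and if $f\preceq f'$ in $\mathcal C(A,B)$, $g\preceq g'$ in $\mathcal C(A',B')$ then $f\otimes g\preceq f'\otimes g'$. Hence $\preceq$ is a preorder enrichment of $\mathcal C$.
   Context: Monoidal categories are treated as strict; $\sigma$ is the symmetry. A discard category is a symmetric monoidal category $(\mathcal C,\otimes,I)$ with, for every object $A$, a morphism $\top_A:A\to I$ such that $\top_I=\mathrm{id}_I$ and $\top_{A\otimes B}=\top_A\otimes\top_B$. A morphism $f:A\to B$ is causal if $\top_B\circ f=\top_A$. For $f,g\in\mathcal C(A,B)$, $f\preceq g$ iff there are an object $X$, $g_0\in\mathcal C(A,B\otimes X)$ and $f_0\in\mathcal C(X,I)$ with $f=(\mathrm{id}_B\otimes f_0)\circ g_0$ and $g=(\mathrm{id}_B\otimes\top_X)\circ g_0$. A morphism $p\in\mathcal C(A,B\otimes X)$ is a pseudo-purification of $f\in\mathcal C(A,B)$, written $p\in\mathrm{Pure}(f)$, if for every object $Y$ and every $g\in\mathcal C(A,B\otimes Y)$ with $f=(\mathrm{id}_B\otimes\top_Y)\circ g$ there exists a causal $c\in\mathcal C(X,Y)$ with $g=(\mathrm{id}_B\otimes c)\circ p$. The category is pseudo-purifiable if every morphism has a pseudo-purification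 and, for all $f_1\in\mathcal C(A_1,B_1\otimes C)$, $f_2\in\mathcal C(C\otimes A_2,B_2)$, $p_1\in\mathrm{Pure}(f_1)$ with $p_1:A_1\to B_1\otimes C\otimes X_1$ and $p_2\in\mathrm{Pure}(f_2)$ with $p_2:C\otimes A_2\to B_2\otimes X_2$, the morphism $q:=(\mathrm{id}_{B_1\otimes B_2}\otimes\sigma_{X_2,X_1})\circ(\mathrm{id}_{B_1}\otimes p_2\otimes\mathrm{id}_{X_1})\circ(\mathrm{id}_{B_1\otimes C}\otimes\sigma_{X_1,A_2})\circ(p_1\otimes\mathrm{id}_{A_2}):A_1\otimes A_2\to B_1\otimes B_2\otimes X_1\otimes X_2$ is a pseudo-purification of $(\mathrm{id}_{B_1}\otimes f_2)\circ(f_1\otimes\mathrm{id}_{A_2})$. *)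

Set Implicit Arguments.
Unset Strict Implicit.

Record Cat := {
  Obj :> Type;
  Hom : Obj -> Obj -> Type;
  idm : forall A, Hom A A;
  comp : forall A B C, Hom B C -> Hom A B -> Hom A C;
  comp_assoc : forall A B C D (h : Hom C D) (g : Hom B C) (f : Hom A B),
    comp h (comp g f) = comp (comp h g) f;
  comp_id_l : forall A B (f : Hom A B), comp (idm B) f = f;
  comp_id_r : forall A B (f : Hom A B), comp f (idm A) = f
}.
Arguments Hom {c} _ _.
Arguments idm {c} _.
Arguments comp {c A B C} _ _.

(** Transport of a morphism along equalities of objects
    (needed because strictness is equality of objects). *)
Definition castH {C : Cat} {A A' B B' : C} (e1 : A = A') (e2 : B = B')
  (f : Hom A B) : Hom A' B' :=
  match e1 in _ = a return Hom a B' with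
  | eq_refl => match e2 in _ = b return Hom A b with eq_refl => f end
  end.

Record SMCat := {
  smcat :> Cat;
  tens : smcat -> smcat -> smcat;
  unitI : smcat;
  tensm : forall A B A' B', @Hom smcat A B -> @Hom smcat A' B' ->
          @Hom smcat (tens A A') (tens B B');
  tensm_id : forall A B, tensm (idm A) (idm B) = idm (tens A B);
  tensm_comp : forall A B C A' B' C' (g : Hom B C) (f : Hom A B)
      (g' : Hom B' C') (f' : Hom A' B'),
    tensm (comp g f) (comp g' f') = comp (tensm g g') (tensm f f');
  tens_assoc : forall A B C, tens (tens A B) C = tens A (tens B C);
  tens_unitl : forall A, tens unitI A = A;
  tens_unitr : forall A, tens A unitI = A;
  tensm_assoc : forall A B C A' B' C' (f : Hom A A') (g : Hom B B') (h : Hom C C'),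
    castH (tens_assoc A B C) (tens_assoc A' B' C') (tensm (tensm f g) h)
    = tensm f (tensm g h);
  tensm_unitl : forall A B (f : Hom A B),
    castH (tens_unitl A) (tens_unitl B) (tensm (idm unitI) f) = f;
  tensm_unitr : forall A B (f : Hom A B),
    castH (tens_unitr A) (tens_unitr B) (tensm f (idm unitI)) = f;
  sym : forall A B, Hom (tens A B) (tens B A);
  sym_nat : forall A B A' B' (f : Hom A A') (g : Hom B B'),
    comp (sym A' B') (tensm f g) = comp (tensm g f) (sym A B);
  sym_inv : forall A B, comp (sym B A) (sym A B) = idm (tens A B);
  sym_hexagon : forall A B C,
    sym A (tens B C) =
    castH (tens_assoc A B C) (eq_sym (tens_assoc B C A))
      (comp (tensm (idm B) (sym A C))
            (castH eq_refl (tens_assoc B A C) (tensm (sym A B) (idm C))))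
}.
Arguments tens {s} _ _.
Arguments unitI {s}.
Arguments tensm {s A B A' B'} _ _.
Arguments sym {s} _ _.
Arguments tens_assoc {s} _ _ _.
Arguments tens_unitl {s} _.
Arguments tens_unitr {s} _.

Record DiscardCat := {
  dsmc :> SMCat;
  top : forall A : dsmc, Hom A unitI;
  top_unit : top unitI = idm unitI;
  top_tens : forall A B : dsmc,
    top (tens A B) = castH eq_refl (tens_unitl unitI) (tensm (top A) (top B))
}.
Arguments top {d} _.

Section Defs.
Variable C : DiscardCat.

Definition causal {A B : C} (f : Hom A B) : Prop := comp (top B) f = top A.

Definition trc {A B Y : C} (g : Hom A (tens B Y)) (h : Hom Y unitI) : Hom A B :=
  castH eq_refl (tens_unitr B) (comp (tensm (idm B) h) g).

Definition preceq {A B : C} (f g : Hom A B) : Prop :=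
  exists (X : C) (g0 : Hom A (tens B X)) (f0 : Hom X unitI),
    f = trc g0 f0 /\ g = trc g0 (top X).

Definition Pure {A B X : C} (f : Hom A B) (p : Hom A (tens B X)) : Prop :=
  forall (Y : C) (g : Hom A (tens B Y)),
    f = trc g (top Y) ->
    exists c : Hom X Y, causal c /\ g = comp (tensm (idm B) c) p.

Definition seqpar {A1 A2 B1 B2 Cc : C} (f1 : Hom A1 (tens B1 Cc))
  (f2 : Hom (tens Cc A2) B2) : Hom (tens A1 A2) (tens B1 B2) :=
  comp (tensm (idm B1) f2)
       (castH eq_refl (tens_assoc B1 Cc A2) (tensm f1 (idm A2))).

Lemma q_eq2 (B1 Cc A2 X1 : C) :
  tens (tens B1 Cc) (tens A2 X1) = tens (tens B1 (tens Cc A2)) X1.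
Proof. now rewrite !tens_assoc. Qed.

Lemma q_eq3 (B1 B2 X1 X2 : C) :
  tens (tens B1 (tens B2 X2)) X1 = tens (tens B1 B2) (tens X2 X1).
Proof. now rewrite !tens_assoc. Qed.

Definition qmor {A1 A2 B1 B2 Cc X1 X2 : C}
  (p1 : Hom A1 (tens (tens B1 Cc) X1)) (p2 : Hom (tens Cc A2) (tens B2 X2))
  : Hom (tens A1 A2) (tens (tens B1 B2) (tens X1 X2)) :=
  comp (tensm (idm (tens B1 B2)) (sym X2 X1))
  (castH eq_refl (q_eq3 B1 B2 X1 X2)
  (comp (tensm (tensm (idm B1) p2) (idm X1))
  (castH eq_refl (q_eq2 B1 Cc A2 X1)
  (comp (tensm (idm (tens B1 Cc)) (sym X1 A2))
  (castH eq_refl (tens_assoc (tens B1 Cc) X1 A2)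
  (tensm p1 (idm A2))))))).

Definition pseudo_purifiable : Prop :=
  (forall (A B : C) (f : Hom A B), exists (X : C) (p : Hom A (tens B X)), Pure f p)
  /\
  (forall (A1 A2 B1 B2 Cc X1 X2 : C)
     (f1 : Hom A1 (tens B1 Cc)) (f2 : Hom (tens Cc A2) B2)
     (p1 : Hom A1 (tens (tens B1 Cc) X1)) (p2 : Hom (tens Cc A2) (tens B2 X2)),
     Pure f1 p1 -> Pure f2 p2 -> Pure (seqpar f1 f2) (qmor p1 p2)).

End Defs.
Arguments preceq {C A B} _ _.
Arguments pseudo_purifiable : clear implicits.

From Stdlib Require Import ProofIrrelevance.

(** The relation [f ⪯ g] says that [f] and [g] are two marginals of one
    morphism [g0 : A -> B ⊗ X]: [f] discards the environment [X] with some
    effect [f0], [g] with the discard [top X].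

    - Reflexivity: every [f] is its own marginal with trivial environment [I].
    - Composition and tensor: the witnesses of [f ⪯ f'] and [g ⪯ g'] combine
      into one witness whose environment is the tensor of the two environments
      ([trc_comp], [trc_tensm]); since [top] is monoidal the discards combine
      to a discard.
    - Transitivity uses pseudo-purifiability.  From [f ⪯ g] via [g0] and
      [g ⪯ h] via [h0, g1], purify [h0] by [p1] and the effect [g1] by [p2].
      The composite [q] of the purifiability axiom purifies
      [(id ⊗ g1) ∘ h0 = g = (id ⊗ top) ∘ g0], so [g0] factors through [q],
      and [q] is [p1] followed by an operation on the environment only
      ([qmor_unit]).  Hence [f] is a marginal of [p1], while [h] is its full
      discard ([pure_marginal]), i.e. [f ⪯ h].

    Since objects are only equal up to propositional equality (strictness),
    the bookkeeping is done with a heterogeneous equality [=~] of morphisms,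
    which makes the transports [castH] invisible. *)

Definition heq {C : Cat} {A B A' B' : C} (f : Hom A B) (g : Hom A' B') : Prop :=
  exists (e1 : A = A') (e2 : B = B'), castH e1 e2 f = g.
Notation "f =~ g" := (heq f g) (at level 70).

Lemma heq_refl {C : Cat} {A B : C} (f : Hom A B) : f =~ f.
Proof. exists eq_refl, eq_refl; reflexivity. Qed.

Lemma heq_sym {C : Cat} {A B A' B' : C} (f : Hom A B) (g : Hom A' B') :
  f =~ g -> g =~ f.
Proof. intros [e1 [e2 H]]; subst g; destruct e1, e2; apply heq_refl. Qed.

Lemma heq_trans {C : Cat} {A B A' B' A'' B'' : C} (f : Hom A B) (g : Hom A' B')
  (h : Hom A'' B'') : f =~ g -> g =~ h -> f =~ h.
Proof.
  intros [e1 [e2 H]] [e3 [e4 H']]; subst g h; destruct e1, e2, e3, e4; apply heq_refl.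
Qed.

Lemma heq_eq {C : Cat} {A B : C} (f g : Hom A B) : f =~ g -> f = g.
Proof.
  intros [e1 [e2 H]]; rewrite (proof_irrelevance _ e1 eq_refl),
    (proof_irrelevance _ e2 eq_refl) in H; exact H.
Qed.

Lemma castH_heq {C : Cat} {A B A' B' : C} (e1 : A = A') (e2 : B = B') (f : Hom A B) :
  castH e1 e2 f =~ f.
Proof. destruct e1, e2; apply heq_refl. Qed.

Lemma heq_castH {C : Cat} {A B A' B' : C} (e1 : A = A') (e2 : B = B') (f : Hom A B) :
  f =~ castH e1 e2 f.
Proof. destruct e1, e2; apply heq_refl. Qed.

Lemma heq_comp {C : Cat} {A B D A' B' D' : C} (f : Hom A B) (g : Hom B D)
  (f' : Hom A' B') (g' : Hom B' D') : f =~ f' -> g =~ g' -> comp g f =~ comp g' f'.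
Proof.
  intros [e1 [e2 H]] [e3 [e4 H']]; subst f' g'; destruct e1, e2, e4.
  rewrite (proof_irrelevance _ e3 eq_refl); apply heq_refl.
Qed.

Lemma heq_idm {C : Cat} {A A' : C} : A = A' -> idm A =~ idm A'.
Proof. intros e; destruct e; apply heq_refl. Qed.

Lemma heq_tensm {C : SMCat} {A B A' B' A1 B1 A1' B1' : C}
  (f : Hom A B) (g : Hom A' B') (f1 : Hom A1 B1) (g1 : Hom A1' B1') :
  f =~ f1 -> g =~ g1 -> tensm f g =~ tensm f1 g1.
Proof.
  intros [e1 [e2 H]] [e3 [e4 H']]; subst f1 g1; destruct e1, e2, e3, e4; apply heq_refl.
Qed.

Lemma heq_braid {C : SMCat} {A B A' B' : C} : A = A' -> B = B' -> sym A B =~ sym A' B'.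
Proof. intros e e'; destruct e, e'; apply heq_refl. Qed.

Lemma tensm_assoc_heq {C : SMCat} {A B D A' B' D' : C}
  (f : Hom A A') (g : Hom B B') (h : Hom D D') :
  tensm (tensm f g) h =~ tensm f (tensm g h).
Proof. exists (tens_assoc _ _ _), (tens_assoc _ _ _); apply tensm_assoc. Qed.

Lemma tensm_unitl_heq {C : SMCat} {A B : C} (f : Hom A B) : tensm (idm unitI) f =~ f.
Proof. exists (tens_unitl _), (tens_unitl _); apply tensm_unitl. Qed.

Lemma tensm_unitr_heq {C : SMCat} {A B : C} (f : Hom A B) : tensm f (idm unitI) =~ f.
Proof. exists (tens_unitr _), (tens_unitr _); apply tensm_unitr. Qed.

Lemma interchange_l {C : SMCat} {A B A' B' : C} (f : Hom A B) (g : Hom A' B') :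
  tensm f g = comp (tensm f (idm B')) (tensm (idm A) g).
Proof. rewrite <- tensm_comp, comp_id_l, comp_id_r; reflexivity. Qed.

Lemma interchange_r {C : SMCat} {A B A' B' : C} (f : Hom A B) (g : Hom A' B') :
  tensm f g = comp (tensm (idm B) g) (tensm f (idm A')).
Proof. rewrite <- tensm_comp, comp_id_l, comp_id_r; reflexivity. Qed.

Lemma tensm_idm_comp {C : SMCat} {B X Y Z : C} (g : Hom Y Z) (f : Hom X Y) :
  tensm (idm B) (comp g f) = comp (tensm (idm B) g) (tensm (idm B) f).
Proof. rewrite <- tensm_comp, comp_id_l; reflexivity. Qed.

(** The symmetry with the unit is the identity: transported to [A -> A] it is
    idempotent (hexagon axiom) and split mono (involutivity). *)
Lemma sym_unitr {C : SMCat} (A : C) : sym A unitI =~ idm A.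
Proof.
  set (s := castH (tens_unitr A) (tens_unitl A) (sym A unitI)).
  set (t := castH (tens_unitl A) (tens_unitr A) (sym unitI A)).
  assert (s_idem : s = comp s s).
  { apply heq_eq. apply heq_trans with (g := sym A unitI); [apply castH_heq|].
    apply heq_trans with (g := sym A (tens unitI unitI)).
    { apply heq_braid; [reflexivity | symmetry; apply tens_unitl]. }
    rewrite sym_hexagon. eapply heq_trans; [apply castH_heq|].
    apply heq_comp.
    - eapply heq_trans; [apply castH_heq|].
      eapply heq_trans; [apply tensm_unitr_heq | apply heq_castH].
    - eapply heq_trans; [apply tensm_unitl_heq | apply heq_castH]. }
  assert (s_retract : comp t s = idm A).
  { apply heq_eq. apply heq_trans with (g := comp (sym unitI A) (sym A unitI)).
    { apply heq_comp; apply castH_heq. }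
    rewrite sym_inv. apply heq_idm, tens_unitr. }
  assert (s_id : s = idm A).
  { assert (H : comp (comp t s) s = s) by (rewrite s_retract; apply comp_id_l).
    rewrite <- comp_assoc, <- s_idem, s_retract in H. symmetry; exact H. }
  eapply heq_trans; [apply heq_castH with (e1 := tens_unitr A) (e2 := tens_unitl A)|].
  fold s. rewrite s_id. apply heq_refl.
Qed.

Lemma sym_unitl {C : SMCat} (A : C) : sym unitI A =~ idm A.
Proof.
  set (t := castH (tens_unitl A) (tens_unitr A) (sym unitI A)).
  assert (t_id : comp (idm A) t = idm A).
  { apply heq_eq. apply heq_trans with (g := comp (sym A unitI) (sym unitI A)).
    { apply heq_comp; [apply castH_heq | apply heq_sym, sym_unitr]. }
    rewrite sym_inv. apply heq_idm, tens_unitl. }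
  rewrite comp_id_l in t_id.
  eapply heq_trans; [apply heq_castH with (e1 := tens_unitl A) (e2 := tens_unitr A)|].
  fold t. rewrite t_id. apply heq_refl.
Qed.

Lemma trc_heq {C : DiscardCat} {A B Y : C} (g : Hom A (tens B Y)) (h : Hom Y unitI) :
  trc g h =~ comp (tensm (idm B) h) g.
Proof. apply castH_heq. Qed.

Lemma heq_trc {C : DiscardCat} {A A' B B' Y : C} (g : Hom A (tens B Y))
  (g' : Hom A' (tens B' Y)) (h : Hom Y unitI) :
  B = B' -> g =~ g' -> trc g h =~ trc g' h.
Proof.
  intros eB Hg. eapply heq_trans; [apply trc_heq|].
  eapply heq_trans; [|apply heq_sym, trc_heq].
  apply heq_comp; [exact Hg | apply heq_tensm; [apply heq_idm, eB | apply heq_refl]].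
Qed.

Lemma trc_unit {C : DiscardCat} {A B : C} (f : Hom A B) :
  f = trc (castH eq_refl (eq_sym (tens_unitr B)) f) (top unitI).
Proof.
  apply heq_eq, heq_sym. eapply heq_trans; [apply trc_heq|].
  rewrite top_unit, tensm_id, comp_id_l. apply castH_heq.
Qed.

Lemma trc_effect {C : DiscardCat} {A B X Y : C} (p : Hom A (tens B X))
  (c : Hom X Y) (e : Hom Y unitI) :
  trc (comp (tensm (idm B) c) p) e = trc p (comp e c).
Proof.
  apply heq_eq. eapply heq_trans; [apply trc_heq|].
  rewrite comp_assoc, <- tensm_idm_comp. apply heq_sym, trc_heq.
Qed.

Lemma trc_trc {C : DiscardCat} {A B X Y : C} (p : Hom A (tens (tens B Y) X))
  (a : Hom X unitI) (b : Hom Y unitI) :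
  trc (trc p a) b =
  trc (castH eq_refl (tens_assoc B Y X) p) (castH eq_refl (tens_unitl unitI) (tensm b a)).
Proof.
  apply heq_eq. eapply heq_trans; [apply trc_heq|].
  apply heq_trans with (g := comp (tensm (tensm (idm B) b) (idm unitI))
                                  (comp (tensm (idm (tens B Y)) a) p)).
  { apply heq_comp; [apply trc_heq | apply heq_sym, tensm_unitr_heq]. }
  rewrite comp_assoc, <- interchange_l.
  eapply heq_trans; [|apply heq_sym, trc_heq].
  apply heq_comp; [apply heq_castH|].
  eapply heq_trans; [apply tensm_assoc_heq|].
  apply heq_tensm; [apply heq_refl | apply heq_castH].
Qed.

Lemma trc_comp {C : DiscardCat} {A B D X Y : C} (f0 : Hom A (tens B X))
  (g0 : Hom B (tens D Y)) (a : Hom X unitI) (b : Hom Y unitI) :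
  comp (trc g0 b) (trc f0 a) =
  trc (comp (castH eq_refl (tens_assoc D Y X) (tensm g0 (idm X))) f0)
      (castH eq_refl (tens_unitl unitI) (tensm b a)).
Proof.
  apply heq_eq.
  apply heq_trans with
    (g := comp (tensm (tensm (idm D) b) a) (comp (tensm g0 (idm X)) f0)).
  - set (u := tensm (idm D) b).
    apply heq_trans with
      (g := comp (tensm (comp u g0) (idm unitI)) (comp (tensm (idm B) a) f0)).
    { apply heq_comp; [apply trc_heq|].
      eapply heq_trans; [apply trc_heq | apply heq_sym, tensm_unitr_heq]. }
    assert (split_u : tensm (comp u g0) (idm unitI)
                      = comp (tensm u (idm unitI)) (tensm g0 (idm unitI))).
    { rewrite <- tensm_comp, comp_id_l; reflexivity. }
    rewrite split_u, comp_assoc, <- (comp_assoc _ (tensm g0 (idm unitI))),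
      <- (interchange_l g0 a), (interchange_r g0 a), !comp_assoc,
      <- (interchange_l u a).
    apply heq_refl.
  - eapply heq_trans; [|apply heq_sym, trc_heq].
    apply heq_comp; [apply heq_comp; [apply heq_refl | apply heq_castH]|].
    eapply heq_trans; [apply tensm_assoc_heq|].
    apply heq_tensm; [apply heq_refl | apply heq_castH].
Qed.

Lemma tens_interleave {C : SMCat} (B X B' Y : C) :
  tens (tens B X) (tens B' Y) = tens B (tens (tens X B') Y).
Proof. now rewrite !tens_assoc. Qed.

Lemma tens_regroup {C : SMCat} (B X B' Y : C) :
  tens B (tens (tens B' X) Y) = tens (tens B B') (tens X Y).
Proof. now rewrite !tens_assoc. Qed.

(** Parallel composition of marginals is a marginal of the tensor, after
    moving both environments to the right with a symmetry. *)
Lemma trc_tensm {C : DiscardCat} {A B X A' B' Y : C} (f0 : Hom A (tens B X))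
  (g0 : Hom A' (tens B' Y)) (a : Hom X unitI) (b : Hom Y unitI) :
  tensm (trc f0 a) (trc g0 b) =
  trc (castH eq_refl (tens_regroup B X B' Y)
         (comp (tensm (idm B) (tensm (sym X B') (idm Y)))
               (castH eq_refl (tens_interleave B X B' Y) (tensm f0 g0))))
      (castH eq_refl (tens_unitl unitI) (tensm a b)).
Proof.
  apply heq_eq.
  apply heq_trans with
    (g := comp (tensm (tensm (idm B) a) (tensm (idm B') b)) (tensm f0 g0)).
  { rewrite <- tensm_comp. apply heq_tensm; apply trc_heq. }
  eapply heq_trans; [|apply heq_sym, trc_heq].
  apply heq_trans with
    (g := comp (tensm (idm B) (tensm (tensm (idm B') a) b))
               (comp (tensm (idm B) (tensm (sym X B') (idm Y)))
                     (castH eq_refl (tens_interleave B X B' Y) (tensm f0 g0)))).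
  2:{ apply heq_comp; [apply heq_castH|].
      apply heq_trans with (g := tensm (idm B) (tensm (idm B') (tensm a b))).
      { apply heq_tensm; [apply heq_refl | apply tensm_assoc_heq]. }
      apply heq_trans with (g := tensm (tensm (idm B) (idm B')) (tensm a b)).
      { apply heq_sym, tensm_assoc_heq. }
      rewrite tensm_id. apply heq_tensm; [apply heq_refl | apply heq_castH]. }
  assert (merge_b : comp (tensm (tensm (idm B') a) b) (tensm (sym X B') (idm Y)) =
                    tensm (comp (tensm (idm B') a) (sym X B')) b)
    by (rewrite <- tensm_comp, comp_id_r; reflexivity).
  rewrite comp_assoc, <- tensm_idm_comp, merge_b, <- sym_nat.
  apply heq_comp; [apply heq_castH|].
  (* it remains to move [a] past [B'] through the unit symmetry [sym I B' = id] *)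
  apply heq_trans with (g := tensm (tensm (tensm (idm B) a) (idm B')) b).
  { apply heq_sym, tensm_assoc_heq. }
  apply heq_trans with (g := tensm (tensm (idm B) (tensm a (idm B'))) b).
  { apply heq_tensm; [apply tensm_assoc_heq | apply heq_refl]. }
  eapply heq_trans; [|apply tensm_assoc_heq].
  apply heq_tensm; [|apply heq_refl].
  apply heq_tensm; [apply heq_refl|].
  apply heq_trans with
    (g := comp (idm B') (castH eq_refl (tens_unitl B') (tensm a (idm B')))).
  { rewrite comp_id_l. apply heq_castH. }
  apply heq_comp; [apply castH_heq | apply heq_sym, sym_unitl].
Qed.

(** The discarded purification of [f] is [f] itself: compare [p] with the
    trivial dilation of [f]; the connecting causal map [X -> I] is [top X]. *)
Lemma pure_marginal {C : DiscardCat} {A B X : C} (f : Hom A B) (p : Hom A (tens B X)) :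
  Pure f p -> f = trc p (top X).
Proof.
  intros Hp.
  destruct (Hp unitI (castH eq_refl (eq_sym (tens_unitr B)) f) (trc_unit f))
    as [c [c_causal Hf]].
  unfold causal in c_causal. rewrite top_unit, comp_id_l in c_causal. subst c.
  apply heq_eq. eapply heq_trans.
  { apply heq_castH with (e1 := eq_refl) (e2 := eq_sym (tens_unitr B)). }
  rewrite Hf. apply heq_sym, trc_heq.
Qed.

(** The composite of the purifiability axiom with trivial outer wires:
    [(id ⊗ g1) ∘ h0] for an effect [g1 : Y ⊗ I -> I] is the marginal [trc h0 g1]. *)
Lemma seqpar_unit {C : DiscardCat} {A B Y : C} (h0 : Hom A (tens B Y)) (g1 : Hom Y unitI) :
  seqpar h0 (castH (eq_sym (tens_unitr Y)) eq_refl g1) =~ trc h0 g1.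
Proof.
  eapply heq_trans; [|apply heq_sym, trc_heq].
  apply heq_comp.
  - eapply heq_trans; [apply castH_heq | apply tensm_unitr_heq].
  - apply heq_tensm; [apply heq_refl | apply castH_heq].
Qed.

(** ... and the corresponding [q] is [p1] followed by an operation acting on
    the environment only. *)
Lemma qmor_unit {C : DiscardCat} {A B Y X1 X2 : C}
  (p1 : Hom A (tens (tens B Y) X1)) (p2 : Hom (tens Y unitI) (tens unitI X2)) :
  qmor p1 p2 =~
  comp (tensm (idm B)
          (comp (sym X2 X1) (tensm (castH (tens_unitr Y) (tens_unitl X2) p2) (idm X1))))
       (castH eq_refl (tens_assoc B Y X1) p1).
Proof.
  unfold qmor. rewrite tensm_idm_comp, <- comp_assoc.
  apply heq_comp.
  2:{ apply heq_tensm; [apply heq_idm, tens_unitr | apply heq_refl]. }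
  eapply heq_trans; [apply castH_heq|].
  apply heq_comp.
  2:{ eapply heq_trans; [apply tensm_assoc_heq|].
      apply heq_tensm; [apply heq_refl|].
      apply heq_tensm; [apply heq_castH | apply heq_refl]. }
  eapply heq_trans; [apply castH_heq|].
  apply heq_trans with (g := comp (idm (tens (tens B Y) X1)) p1).
  - apply heq_comp.
    + eapply heq_trans; [apply castH_heq | apply tensm_unitr_heq].
    + rewrite <- (tensm_id (tens B Y) X1).
      apply heq_tensm; [apply heq_refl | apply sym_unitr].
  - rewrite comp_id_l. apply heq_castH.
Qed.

Lemma preceq_refl (C : DiscardCat) (A B : C) (f : Hom A B) : preceq f f.
Proof.
  exists unitI, (castH eq_refl (eq_sym (tens_unitr B)) f), (top unitI).
  split; apply trc_unit.
Qed.

Lemma preceq_comp (C : DiscardCat) (A B D : C) (f f' : Hom A B) (g g' : Hom B D) :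
  preceq f f' -> preceq g g' -> preceq (comp g f) (comp g' f').
Proof.
  intros [X [f0 [a [-> ->]]]] [Y [g0 [b [-> ->]]]].
  eexists _, _, _; split; [apply trc_comp|].
  rewrite trc_comp, top_tens. reflexivity.
Qed.

Lemma preceq_tensm (C : DiscardCat) (A B A' B' : C) (f f' : Hom A B) (g g' : Hom A' B') :
  preceq f f' -> preceq g g' -> preceq (tensm f g) (tensm f' g').
Proof.
  intros [X [f0 [a [-> ->]]]] [Y [g0 [b [-> ->]]]].
  eexists _, _, _; split; [apply trc_tensm|].
  rewrite trc_tensm, top_tens. reflexivity.
Qed.

(** Transitivity: [f] and [h] are both marginals of a purification of [h0]. *)
Lemma preceq_trans (C : DiscardCat) (HC : pseudo_purifiable C) (A B : C)
  (f g h : Hom A B) : preceq f g -> preceq g h -> preceq f h.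
Proof.
  intros [X [g0 [f0 [Hf Hg]]]] [Y [h0 [g1 [Hg' Hh]]]].
  destruct HC as [purif_exists purif_seqpar].
  destruct (purif_exists _ _ h0) as [X1 [p1 Hp1]].
  set (f2 := castH (eq_sym (tens_unitr Y)) eq_refl g1 : Hom (tens Y unitI) unitI).
  destruct (purif_exists _ _ f2) as [X2 [p2 Hp2]].
  (* [g0], seen with the trivial wires of the axiom, dilates [seqpar h0 f2 = g] *)
  set (g0' := castH (eq_sym (tens_unitr A))
                (f_equal (fun b => tens b X) (eq_sym (tens_unitr B))) g0).
  assert (g_marg : seqpar h0 f2 = trc g0' (top X)).
  { apply heq_eq. eapply heq_trans; [apply seqpar_unit|].
    rewrite <- Hg', Hg. apply heq_trc; [symmetry; apply tens_unitr | apply heq_castH]. }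
  destruct (purif_seqpar _ _ _ _ _ _ _ _ _ _ _ Hp1 Hp2 X g0' g_marg)
    as [c [_ Hc]].
  exists (tens Y X1), (castH eq_refl (tens_assoc B Y X1) p1),
    (comp (comp f0 c)
          (comp (sym X2 X1) (tensm (castH (tens_unitr Y) (tens_unitl X2) p2) (idm X1)))).
  split.
  - rewrite Hf, <- trc_effect. apply heq_eq.
    eapply heq_trans.
    { apply heq_trc with (g' := g0'); [symmetry; apply tens_unitr | apply heq_castH]. }
    rewrite Hc, (trc_effect (qmor p1 p2)).
    apply heq_trc; [apply tens_unitr | apply qmor_unit].
  - rewrite Hh, (pure_marginal h0 p1 Hp1), trc_trc, top_tens. reflexivity.
Qed.

Theorem lemma5 (C : DiscardCat) (HC : pseudo_purifiable C) :
  (forall (A B : C) (f : Hom A B), preceq f f)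
  /\ (forall (A B : C) (f g h : Hom A B), preceq f g -> preceq g h -> preceq f h)
  /\ (forall (A B Cc : C) (f f' : Hom A B) (g g' : Hom B Cc),
        preceq f f' -> preceq g g' -> preceq (comp g f) (comp g' f'))
  /\ (forall (A B A' B' : C) (f f' : Hom A B) (g g' : Hom A' B'),
        preceq f f' -> preceq g g' -> preceq (tensm f g) (tensm f' g')).
Proof.
  split; [|split; [|split]].
  - apply preceq_refl.
  - apply preceq_trans, HC.
  - apply preceq_comp.
  - apply preceq_tensm.
Qed.
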